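(* In type $C_\infty$, let $b\ge1$ and $\nu=(\mu_1,\mu_2,\nu_1,\dots,\nu_b)\in I^{b+2}$. Then \[\psi_{b+1}\Psi[2,b]e(\nu)=\Psi[2,b]\psi_1e(\nu)+\sum_{k=1}^b\Psi_2(k,2,b-k)\,c_k\,\Psi[2,k-1]e(\nu),\] where $c_k=x_k+x_{k+2}$ if $(\mu_1,\mu_2,\nu_k)=(1,0,1)$, $c_k=1$ if $(\mu_1,\mu_2,\nu_k)=(i,i\pm1,i)$ for some $i$ with $\mu_2\ne0$, and $c_k=0$ otherwise.
   Context: Type $C_\infty$: $I=\mathbb Z_{\ge0}$. Quiver Hecke algebra with $Q_{ii}=0$, $Q_{ji}(u,v)=Q_{ij}(v,u)$, for $i<j$: $Q_{01}=u+v^2$, $Q_{i,i+1}=u+v$ ($i\ge1$), else $1$; standard relations $\psi_re(\nu)=e(s_r\nu)\psi_r$, $x_r\psi_re(\nu)=(\psi_rx_{r+1}-\delta_{\nu_r\nu_{r+1}})e(\nu)$, $x_{r+1}\psi_re(\nu)=(\psi_rx_r+\delta_{\nu_r\nu_{r+1}})e(\nu)$, $\psi_r^2e(\nu)=Q_{\nu_r\nu_{r+1}}(x_r,x_{r+1})e(\nu)$, distant commutation, and $(\psi_{r+1}\psi_r\psi_{r+1}-\psi_r\psi_{r+1}\psi_r)e(\nu)=\delta_{\nu_r\nu_{r+2}}\frac{Q_{\nu_r\nu_{r+1}}(x_r,x_{r+1})-Q_{\nu_r\nu_{r+1}}(x_{r+2},x_{r+1})}{x_r-x_{r+2}}e(\nu)$.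 For $a,b\ge0$, $w[a,b]\in\mathfrak S_n$ maps $x\mapsto x+b$ ($1\le x\le a$), $x\mapsto x-a$ ($a<x\le a+b$), and fixes $x>a+b$; it is fully commutative with reduced expression $(s_b\cdots s_1)(s_{b+1}\cdots s_2)\cdots(s_{a+b-1}\cdots s_a)$. For $c\ge0$, $S_2(c,a,b)$ is obtained from this reduced expression by replacing each $s_i$ with $s_{i+c}$; $\Psi_2(c,a,b)$ is the corresponding product of $\psi$'s (well defined), and $\Psi[a,b]=\Psi_2(0,a,b)$; in particular $\Psi[2,0]=1$. *)

From HB Require Import structures.
From mathcomp Require Import all_boot all_order all_algebra.
Set Implicit Arguments. Unset Strict Implicit. Unset Printing Implicit Defensive.
Import GRing.Theory.
Local Open Scope ring_scope.

(* Sequences nu in I^n, I = nat; positions are 1-indexed as in the paper. *)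
Definition nuAt (nu : seq nat) (r : nat) : nat := nth 0%N nu r.-1.

Definition swapAt (r : nat) (nu : seq nat) : seq nat :=
  [seq (if (i == r.-1)%N then nuAt nu r.+1
        else if (i == r)%N then nuAt nu r else nth 0%N nu i)
  | i <- iota 0 (size nu)].

Section Poly.
Variable A : nzRingType.

Definition Qlt (i j : nat) (u v : A) : A :=
  if (i == 0)%N && (j == 1)%N then u + v ^+ 2
  else if j == i.+1 then u + v else 1.

Definition Q (i j : nat) (u v : A) : A :=
  if i == j then 0 else if (i < j)%N then Qlt i j u v else Qlt j i v u.

(* The divided difference (Q_{ij}(u,v) - Q_{ij}(w,v)) / (u - w), written out
   as the polynomial it is (all Q_{ij} are explicit polynomials):
   Q_ii = 0 -> 0;  Q_01 = u+v^2 -> 1;  Q_10 = v+u^2 -> u+w;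
   Q_{i,i+1} = u+v, Q_{i+1,i} = v+u (i>=1) -> 1;  Q_ij = 1 otherwise -> 0. *)
Definition Qdd (i j : nat) (u v w : A) : A :=
  if i == j then 0
  else if (i == 0)%N && (j == 1)%N then 1
  else if (i == 1)%N && (j == 0)%N then u + w
  else if (j == i.+1) || (i == j.+1) then 1
  else 0.
End Poly.

(* Elements e(nu) (nu in I^n), x_1..x_n, psi_1..psi_{n-1} of a ring A
   satisfying the defining relations of the quiver Hecke algebra of type
   C_infty on n strands. *)
Record KLR_Cinf (A : nzRingType) (n : nat)
    (e : seq nat -> A) (x psi : nat -> A) : Prop := {
  e_orth : forall nu nu', size nu = n -> size nu' = n ->
     e nu * e nu' = (if nu == nu' then e nu else 0);
  x_comm : forall r s, (1 <= r <= n)%N -> (1 <= s <= n)%N ->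
     x r * x s = x s * x r;
  x_e : forall r nu, (1 <= r <= n)%N -> size nu = n -> x r * e nu = e nu * x r;
  psi_e : forall r nu, (1 <= r < n)%N -> size nu = n ->
     psi r * e nu = e (swapAt r nu) * psi r;
  x_psi_far : forall r s, (1 <= r < n)%N -> (1 <= s <= n)%N ->
     s != r -> s != r.+1 -> x s * psi r = psi r * x s;
  x_psi_l : forall r nu, (1 <= r < n)%N -> size nu = n ->
     x r * psi r * e nu =
     (psi r * x r.+1 - (nuAt nu r == nuAt nu r.+1)%:R) * e nu;
  x_psi_r : forall r nu, (1 <= r < n)%N -> size nu = n ->
     x r.+1 * psi r * e nu =
     (psi r * x r + (nuAt nu r == nuAt nu r.+1)%:R) * e nu;
  psi_sq : forall r nu, (1 <= r < n)%N -> size nu = n ->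
     psi r * psi r * e nu = Q (nuAt nu r) (nuAt nu r.+1) (x r) (x r.+1) * e nu;
  psi_far : forall r s, (1 <= r < n)%N -> (1 <= s < n)%N ->
     (r.+1 < s)%N || (s.+1 < r)%N -> psi r * psi s = psi s * psi r;
  psi_braid : forall r nu, (1 <= r)%N -> (r.+2 <= n)%N -> size nu = n ->
     (psi r.+1 * psi r * psi r.+1 - psi r * psi r.+1 * psi r) * e nu =
     (if nuAt nu r == nuAt nu r.+2
      then Qdd (nuAt nu r) (nuAt nu r.+1) (x r) (x r.+1) (x r.+2) else 0)
     * e nu
}.

(* Reduced word of w[a,b]: (s_b..s_1)(s_{b+1}..s_2)...(s_{a+b-1}..s_a),
   shifted by c (s_i |-> s_{i+c}): this is S_2(c,a,b). *)
Definition S2word (c a b : nat) : seq nat :=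
  flatten [seq [seq (i + c)%N | i <- rev (iota j b)] | j <- iota 1 a].

Definition Psi2 (A : nzRingType) (psi : nat -> A) (c a b : nat) : A :=
  \prod_(i <- S2word c a b) psi i.

Definition PsiAB (A : nzRingType) (psi : nat -> A) (a b : nat) : A :=
  Psi2 psi 0 a b.

Definition ck (A : nzRingType) (x : nat -> A) (mu1 mu2 nuk k : nat) : A :=
  if [&& mu1 == 1, mu2 == 0 & nuk == 1]%N then x k + x k.+2
  else if [&& nuk == mu1, (mu2 == mu1.+1) || (mu1 == mu2.+1) & mu2 != 0%N]
  then 1 else 0.

From HB Require Import structures.
From mathcomp Require Import all_boot all_order all_algebra.
From mathcomp Require Import zify.
Import GRing.Theory.
Local Open Scope ring_scope.

(* Since Psi[2,b+1] = psi_{b+1} psi_{b+2} Psi[2,b], the left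
   side for b+1 is psi_{b+2} psi_{b+1} psi_{b+2} Psi[2,b] e(nu).  Moving e(nu)
   across Psi[2,b] turns it into e(w[2,b] nu), whose entries at positions b+1,
   b+2, b+3 are mu1, mu2, nu_{b+1}; there the braid relation replaces
   psi_{b+2} psi_{b+1} psi_{b+2} by psi_{b+1} psi_{b+2} psi_{b+1} plus a
   divided difference of Q, which is exactly c_{b+1}.  The induction hypothesis
   then applies to psi_{b+1} Psi[2,b] e(nu), and the identity
   psi_{b+1} psi_{b+2} Psi_2(k,2,b-k) = Psi_2(k,2,b+1-k) turns its correction
   terms into those for b+1. *)

Lemma rev_iotaS (j m : nat) : rev (iota j m.+1) = (j + m)%N :: rev (iota j m).
Proof. by rewrite -addn1 iotaD rev_cat. Qed.

Lemma size_swapAt r nu : size (swapAt r nu) = size nu.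
Proof. by rewrite size_map size_iota. Qed.

Lemma nuAt_swapAt r nu i : (1 <= r)%N -> (1 <= i <= size nu)%N ->
  nuAt (swapAt r nu) i =
  if i == r then nuAt nu r.+1 else if i == r.+1 then nuAt nu r else nuAt nu i.
Proof.
move=> r_gt0 /andP[i_gt0 i_le].
rewrite /nuAt /swapAt (nth_map 0%N) ?size_iota; last by lia.
rewrite nth_iota ?add0n; last by lia.
have [->|i_neq_r] := eqVneq i r; first by rewrite eqxx.
have -> : (i.-1 == r.-1) = false by apply/eqP; lia.
have [->|i_neq_r1] := eqVneq i r.+1; first by rewrite eqxx.
by have -> : (i.-1 == r) = false by apply/eqP; lia.
Qed.

Definition word_act (w nu : seq nat) : seq nat := foldr swapAt nu w.

Lemma size_word_act w nu : size (word_act w nu) = size nu.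
Proof. by elim: w => //= r w IH; rewrite size_swapAt. Qed.

Lemma nuAt_act_rev_iota c m nu i :
  (c + m + 2 <= size nu)%N -> (1 <= i <= size nu)%N ->
  nuAt (word_act (rev (iota c.+1 m)) nu) i =
  if i == (c + m).+1 then nuAt nu c.+1
  else if (c.+1 <= i <= c + m)%N then nuAt nu i.+1 else nuAt nu i.
Proof.
elim: m i => [|m IH] i size_nu i_bd.
  by rewrite /= addn0; case: eqP => [->|_] //; case: ifP => //; lia.
rewrite rev_iotaS /= nuAt_swapAt ?size_word_act; try lia.
rewrite !IH; try lia.
by repeat case: ifP; move=> *; first [lia | congr nuAt; lia | done].
Qed.

Lemma S2word_2 c m : S2word c 2 m =
  [seq (i + c)%N | i <- rev (iota 1 m)] ++ [seq (i + c)%N | i <- rev (iota 2 m)].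
Proof. by rewrite /S2word /= cats0. Qed.

Lemma nuAt_act_S2word m nu : (m + 3 <= size nu)%N ->
  [/\ nuAt (word_act (S2word 0 2 m) nu) m.+1 = nuAt nu 1,
      nuAt (word_act (S2word 0 2 m) nu) m.+2 = nuAt nu 2 &
      nuAt (word_act (S2word 0 2 m) nu) m.+3 = nuAt nu m.+3].
Proof.
move=> size_nu.
rewrite S2word_2 !(eq_map addn0) !map_id /word_act foldr_cat -!/(word_act _ _).
split; rewrite nuAt_act_rev_iota ?size_word_act; try lia;
  repeat case: ifP; move=> *; try lia;
  rewrite nuAt_act_rev_iota; try lia;
  by repeat case: ifP; move=> *; first [lia | congr nuAt; lia | done].
Qed.

Lemma Psi2_b0 (R : nzRingType) (psi : nat -> R) c a : Psi2 psi c a 0 = 1.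
Proof. by rewrite /Psi2 /S2word; elim: (iota 1 a) => [|j s IH]; rewrite ?big_nil. Qed.

Lemma Qdd_ck (R : nzRingType) (y : nat -> R) k i j l :
  (if i == l then Qdd i j (y k) (y k.+1) (y k.+2) else 0) = ck y i j l k.
Proof.
rewrite /ck /Qdd; have [<-|] := eqVneq i l;
  by repeat case: ifP; move=> *; first [lia | done].
Qed.

Section KLR.
Local Set Implicit Arguments.
Variables (A : nzRingType) (n : nat) (e : seq nat -> A) (x psi : nat -> A).
Hypothesis klr : KLR_Cinf n e x psi.

Lemma prod_psi_e w nu : all (fun r => 1 <= r < n)%N w -> size nu = n ->
  \prod_(r <- w) psi r * e nu = e (word_act w nu) * \prod_(r <- w) psi r.
Proof.
move=> w_bd size_nu; elim: w w_bd => [|r w IH] /=; first by rewrite big_nil mul1r mulr1.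
case/andP=> r_bd w_bd.
by rewrite big_cons -mulrA IH // !mulrA (psi_e klr) // size_word_act.
Qed.

Lemma all_S2word c m : (c + m + 2 <= n)%N ->
  all (fun r => 1 <= r < n)%N (S2word c 2 m).
Proof.
move=> bd; rewrite S2word_2 all_cat !all_map.
by apply/andP; split; apply/allP => i; rewrite /= mem_rev mem_iota; lia.
Qed.

Lemma Psi2_2S c m : (c + m + 3 <= n)%N ->
  Psi2 psi c 2 m.+1 = psi (m.+1 + c)%N * psi (m.+2 + c)%N * Psi2 psi c 2 m.
Proof.
move=> bd; rewrite /Psi2 !S2word_2 !rev_iotaS /= !big_cat /= !big_cons big_cat /= big_cons.
set L := \prod_(i <- [seq (i + c)%N | i <- rev (iota 1 m)]) psi i.
have far : GRing.comm (psi (m.+2 + c)%N) L.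
  rewrite /L big_seq; apply: commr_prod => j /mapP[i].
  by rewrite mem_rev mem_iota => i_bd ->; apply/esym/(psi_far klr); lia.
by rewrite (mulrA L) -far !mulrA.
Qed.

Lemma PsiAB_2S m : (m.+3 <= n)%N ->
  PsiAB psi 2 m.+1 = psi m.+1 * psi m.+2 * PsiAB psi 2 m.
Proof. by move=> bd; rewrite /PsiAB Psi2_2S ?addn0 //; lia. Qed.

Lemma psi_PsiAB_braid m nu : (m.+3 <= n)%N -> size nu = n ->
  psi m.+2 * PsiAB psi 2 m.+1 * e nu =
  psi m.+1 * psi m.+2 * (psi m.+1 * PsiAB psi 2 m * e nu) +
  ck x (nuAt nu 1) (nuAt nu 2) (nuAt nu m.+3) m.+1 * PsiAB psi 2 m * e nu.
Proof.
move=> bd size_nu.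
set nu' := word_act (S2word 0 2 m) nu.
have size_nu' : size nu' = n by rewrite size_word_act.
have move_e : PsiAB psi 2 m * e nu = e nu' * PsiAB psi 2 m.
  by apply: prod_psi_e => //; apply: all_S2word; lia.
have [nu'1 nu'2 nu'3] := @nuAt_act_S2word m nu ltac:(lia).
have braid : psi m.+2 * psi m.+1 * psi m.+2 * e nu' =
    psi m.+1 * psi m.+2 * psi m.+1 * e nu' +
    ck x (nuAt nu 1) (nuAt nu 2) (nuAt nu m.+3) m.+1 * e nu'.
  by apply/eqP; rewrite addrC -subr_eq -mulrBl (psi_braid klr) // nu'1 nu'2 nu'3 Qdd_ck.
by rewrite PsiAB_2S // -!mulrA !move_e !mulrA braid mulrDl.
Qed.

Lemma psi_PsiAB_e m nu : (m.+2 <= n)%N -> size nu = n ->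
  psi m.+1 * PsiAB psi 2 m * e nu = PsiAB psi 2 m * psi 1%N * e nu +
  \sum_(1 <= k < m.+1) Psi2 psi k 2 (m - k)
     * ck x (nuAt nu 1) (nuAt nu 2) (nuAt nu k.+2) k * PsiAB psi 2 k.-1 * e nu.
Proof.
move=> + size_nu; elim: m => [|m IH] bd.
  by rewrite /PsiAB Psi2_b0 big_geq // addr0 mulr1 mul1r.
rewrite psi_PsiAB_braid // IH ?(ltnW bd) // mulrDr PsiAB_2S // !mulrA.
rewrite [in RHS]big_nat_recr //= subnn Psi2_b0 mul1r -addrA; congr (_ + (_ + _)).
rewrite big_distrr; apply: eq_big_nat => k k_bd.
have -> : (m.+1 - k = (m - k).+1)%N by lia.
rewrite Psi2_2S; last by lia.
have -> : ((m - k).+1 + k = m.+1)%N by lia.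
have -> : ((m - k).+2 + k = m.+2)%N by lia.
by rewrite /= !mulrA.
Qed.
End KLR.

Theorem mainTheorem14 (A : nzRingType) (b : nat)
  (e : seq nat -> A) (x psi : nat -> A)
  (mu1 mu2 : nat) (nus : seq nat) :
  KLR_Cinf b.+2 e x psi -> (1 <= b)%N -> size nus = b ->
  psi b.+1 * PsiAB psi 2 b * e [:: mu1, mu2 & nus] =
  PsiAB psi 2 b * psi 1%N * e [:: mu1, mu2 & nus] +
  \sum_(1 <= k < b.+1)
     Psi2 psi k 2 (b - k) * ck x mu1 mu2 (nth 0%N nus k.-1) k
       * PsiAB psi 2 k.-1 * e [:: mu1, mu2 & nus].
Proof.
move=> klr _ size_nus.
rewrite (psi_PsiAB_e klr) //= ?size_nus //.
by congr (_ + _); apply: eq_big_nat => -[].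
Qed.
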